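(* Let $\Gamma$ be a single-player extensive-form game without absentmindedness. Then $$\mathrm{VoR}^{\mathrm{opt}}(\Gamma)\le\frac{u_1(\mathrm{opt}(\mathrm{pr}_1(\Gamma)))}{\max_{z\in\mathcal Z}\chi(z)u_1(z)}\le\max_{h\in\mathcal H_c}\beta(h),$$ where by convention $\max_{h\in\mathcal H_c}\beta(h)=1$ if $\mathcal H_c=\emptyset$.
   Context: A single-player extensive-form game consists of a finite rooted tree (nodes $\mathcal H$, leaves $\mathcal Z$, actions $A_h$); nonterminal nodes belong to Player 1 or to chance; $\mathcal H_c$ is the set of chance nodes, each with a fixed distribution $\mathbb P_c(\cdot\mid h)$ on $A_h$; Player 1 has utility $u_1:\mathcal Z\to\mathbb R_{\ge0}$ and a partition of its nodes into infosets with common action sets $A_I$. For a node $h$ with root-to-$h$ path $(h_0,\dots,h_{d-1})$ (excluding $h$), $\mathrm{obs}(h)=(i_k,I_k,a_k)_k$ lists the player at $h_k$ (1 or chance), its infoset and the action taken; $\mathrm{obs}_1(h)$ is the restriction to Player 1. The game has absentmindedness if some infoset appears more than once among the $I_k$ in $\mathrm{obs}(h)$ for some $h$. $\mathrm{pr}_1(\Gamma)$ has the same tree and utilities, each infoset partitioned into classes of $h\sim h'\iff\mathrm{obs}_1(h)=\mathrm{obs}_1(h')$. $u_1(\mathrm{opt}(\cdot))$ is the maximum expected utility over behavioral strategies; $\mathrm{VoR}^{\mathrm{opt}}(\Gamma)=u_1(\mathrm{opt}(\mathrm{pr}_1(\Gamma)))/u_1(\mathrm{opt}(\Gamma))$.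 Chance coefficient: $\chi(z)=\prod_{k:\,i_k=c}\mathbb P_c(a_k\mid h_k)$ over the chance nodes on the path to $z$ (and $\chi(z)=1$ if there are none). Branching factor: for $h\in\mathcal H_c$ and $a\in A_h$, let $H_{ha}$ be the set of chance nodes in the subtree rooted at the child of $h$ reached by $a$; $b_h(a)=1$ if $H_{ha}=\emptyset$, else $b_h(a)=\max_{h'\in H_{ha}}\beta(h')$; $\beta(h)=\sum_{a\in A_h}b_h(a)$ (defined recursively from the bottom of the tree). *)

From HB Require Import structures.
From mathcomp Require Import all_boot all_order all_algebra.
From mathcomp Require Import boolp classical_sets reals.
From Stdlib Require List.
Set Implicit Arguments. Unset Strict Implicit. Unset Printing Implicit Defensive.
Import Order.TTheory GRing.Theory Num.Theory.
Local Open Scope ring_scope.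

(* A finite single-player extensive-form game tree.
   - [Leaf u]        : terminal node z with utility u_1(z) = u.
   - [PNode lab cs]    : Player-1 node in infoset (label) I; its actions are the
                       positions 0 .. size cs - 1, action i leads to child nth i cs.
   - [CNode cs]      : chance node; action j leads to the j-th child with
                       probability the first component of the j-th pair. *)
Inductive tree (R : Type) (L : Type) : Type :=
| Leaf of R
| PNode of L & seq (tree R L)
| CNode of seq (R * tree R L).

Arguments Leaf {R L}.
Arguments PNode {R L}.
Arguments CNode {R L}.

Section Games.
Variable R : realType.

(* maximum of a nonempty list (only used on nonempty lists) *)
Definition maxl (s : seq R) : R :=
  match s with [::] => 0 | x :: s' => foldr Num.max x s' end.

Definition suml (s : seq R) : R := foldr +%R 0 s.

Section Labels.
Variable L : Type.

Fixpoint pnodes (t : tree R L) : seq (L * nat) :=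
  match t with
  | Leaf _ => [::]
  | PNode lab cs => (lab, size cs) :: flatten (map pnodes cs)
  | CNode cs => flatten (map (fun pc => pnodes pc.2) cs)
  end.

Fixpoint wf_nodes (t : tree R L) : Prop :=
  match t with
  | Leaf u => 0 <= u
  | PNode _ cs => cs <> [::] /\ foldr (fun c P => wf_nodes c /\ P) True cs
  | CNode cs =>
      foldr (fun pc P => 0 <= pc.1 /\ P) True cs /\
      suml (map fst cs) = 1 /\
      foldr (fun pc P => wf_nodes pc.2 /\ P) True cs
  end.

Definition infosets_consistent (t : tree R L) : Prop :=
  forall J n m, List.In (J, n) (pnodes t) -> List.In (J, m) (pnodes t) -> n = m.

Definition wf_game (t : tree R L) : Prop := wf_nodes t /\ infosets_consistent t.

(* No absentmindedness: along every root-to-node path, no Player-1 infoset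
   is visited twice.  [seen] = infosets of the Player-1 ancestors. *)
Fixpoint no_am_from (seen : seq L) (t : tree R L) : Prop :=
  match t with
  | Leaf _ => True
  | PNode lab cs => ~ List.In lab seen /\
                  foldr (fun c P => no_am_from (lab :: seen) c /\ P) True cs
  | CNode cs => foldr (fun pc P => no_am_from seen pc.2 /\ P) True cs
  end.

Definition no_absentmindedness (t : tree R L) : Prop := no_am_from [::] t.

(* Behavioral strategies: sigma I a = probability of action a at infoset I. *)
Definition behavioral (sigma : L -> nat -> R) (t : tree R L) : Prop :=
  forall J n, List.In (J, n) (pnodes t) ->
    (forall a, (a < n)%N -> 0 <= sigma J a) /\ \sum_(a < n) sigma J a = 1.

Fixpoint eu (sigma : L -> nat -> R) (t : tree R L) : R :=
  match t with
  | Leaf u => u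
  | PNode lab cs =>
      (fix go (i : nat) (l : seq (tree R L)) : R :=
         match l with
         | [::] => 0
         | c :: l' => sigma lab i * eu sigma c + go i.+1 l'
         end) 0%N cs
  | CNode cs => foldr (fun pc acc => pc.1 * eu sigma pc.2 + acc) 0 cs
  end.

(* u_1(opt(t)) : the optimal (supremum = maximum) expected utility *)
Definition opt_value (t : tree R L) : R :=
  sup [set eu sigma t | sigma in [set sigma | behavioral sigma t]].

(* pr_1(Gamma): same tree, infoset I refined by obs_1(h), the sequence of
   (infoset, action) pairs of the Player-1 ancestors of h (root first). *)
Fixpoint pr1_from (o : seq (L * nat)) (t : tree R L) : tree R (L * seq (L * nat)) :=
  match t with
  | Leaf u => Leaf u
  | PNode lab cs =>
      PNode (lab, o)
        ((fix go (i : nat) (l : seq (tree R L)) :=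
            match l with
            | [::] => [::]
            | c :: l' => pr1_from (rcons o (lab, i)) c :: go i.+1 l'
            end) 0%N cs)
  | CNode cs => CNode (map (fun pc => (pc.1, pr1_from o pc.2)) cs)
  end.

Definition pr1 (t : tree R L) := pr1_from [::] t.


(* the pairs (chi(z), u_1(z)) over all leaves z; [chi] accumulates the
   product of the chance probabilities along the path *)
Fixpoint leaves_chi (chi : R) (t : tree R L) : seq (R * R) :=
  match t with
  | Leaf u => [:: (chi, u)]
  | PNode _ cs => flatten (map (leaves_chi chi) cs)
  | CNode cs => flatten (map (fun pc => leaves_chi (chi * pc.1) pc.2) cs)
  end.

Definition max_chi_u (t : tree R L) : R :=
  maxl (map (fun cu => cu.1 * cu.2) (leaves_chi 1 t)).

(* b from the list of beta-values of the chance nodes H_{ha} below a child *)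
Definition b_of (betas : seq R) : R := if betas is [::] then 1 else maxl betas.

Fixpoint chance_betas (t : tree R L) : seq R :=
  match t with
  | Leaf _ => [::]
  | PNode _ cs => flatten (map chance_betas cs)
  | CNode cs =>
      let bs := map (fun pc => chance_betas pc.2) cs in
      suml (map b_of bs) :: flatten bs
  end.

Definition max_beta (t : tree R L) : R := b_of (chance_betas t).

End Labels.

Definition VoR_opt (L : Type) (t : tree R L) : R := opt_value (pr1 t) / opt_value t.
End Games.

From mathcomp Require Import all_boot all_order all_algebra.
From mathcomp Require Import boolp reals.
From Stdlib Require List.
Import Order.TTheory GRing.Theory Num.Theory.
Local Open Scope ring_scope.
Set Implicit Arguments. Unset Strict Implicit. Unset Printing Implicit Defensive.

(* Fix a leaf z.  Without absentmindedness the Player-1 infosets on the path to z are pairwise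
   distinct, so the pure strategy playing the actions of that path is well defined; it reaches z
   with probability chi(z), hence chi(z) u(z) <= u(opt(Gamma)), which gives the first inequality.
   Conversely, for every behavioral strategy of any game, c * EU <= beta * max_z c chi(z) u(z),
   by induction on the tree with the chance coefficient c accumulated above the root: at a
   Player-1 node EU is a convex combination of the children's values, and at a chance node h the
   children's bounds add up to sum_a b_h(a) = beta(h).  Since pr_1(Gamma) has the same leaves,
   chance coefficients and chance nodes as Gamma, this bounds u(opt(pr_1(Gamma))).  When
   max_z chi(z) u(z) = 0 both sides vanish, Rocq's x / 0 being 0. *)

Lemma foldr_and (T : Type) (Q : T -> Prop) (s : seq T) :
  foldr (fun x P => Q x /\ P) True s <-> (forall x, List.In x s -> Q x).
Proof.
elim: s => [|y s IH] /=; first by split.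
rewrite IH; split=> [[Qy Qs] x [<-|/Qs]|Qs] //.
by split=> [|x sx]; apply: Qs; [left|right].
Qed.

Lemma In_flatten_map (A B : Type) (f : A -> seq B) (s : seq A) y :
  List.In y (flatten (map f s)) <-> exists2 x, List.In x s & List.In y (f x).
Proof.
elim: s => [|x s IH] /=; first by split=> // -[].
rewrite List.in_app_iff IH; split.
- by move=> [yx|[z zs yz]]; [exists x; [left|] | exists z; [right|]].
- by move=> [z [<-|zs] yz]; [left | right; exists z].
Qed.

Lemma In_nth (T : Type) (s : seq T) d x :
  List.In x s -> exists2 k, (k < size s)%N & nth d s k = x.
Proof.
elim: s => [//|y s IH] /= [->|/IH [k ks xk]]; first by exists 0%N.
by exists k.+1.
Qed.

Lemma nth_In (T : Type) (s : seq T) d k : (k < size s)%N -> List.In (nth d s k) s.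
Proof. by elim: s k => [//|x s IH] [|k] /= ks; [left | right; apply: IH]. Qed.

Section SumsOverLists.
Variables (R : numDomainType) (T : Type).
Implicit Types (s : seq T) (F G : T -> R).

Lemma ler_sum_In s F G : (forall x, List.In x s -> F x <= G x) ->
  \sum_(x <- s) F x <= \sum_(x <- s) G x.
Proof.
elim: s => [|y s IH] FG; first by rewrite !big_nil.
rewrite !big_cons lerD ?FG //; first by left.
by apply: IH => x sx; apply: FG; right.
Qed.

Lemma sumr_ge0_In s F : (forall x, List.In x s -> 0 <= F x) -> 0 <= \sum_(x <- s) F x.
Proof. by move=> F0; apply: le_trans (ler_sum_In F0); rewrite big1_eq. Qed.

Lemma ler_term_sum_In s F x : (forall y, List.In y s -> 0 <= F y) ->
  List.In x s -> F x <= \sum_(y <- s) F y.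
Proof.
elim: s => [//|y s IH] F0 /= [<-|sx]; rewrite big_cons.
- by rewrite lerDl sumr_ge0_In // => z sz; apply: F0; right.
- by rewrite ler_wpDl ?IH // => [|z sz]; apply: F0; [left|right].
Qed.

End SumsOverLists.

Section MaxOverLists.
Variable R : realType.
Implicit Types (s : seq R) (x b : R).

Lemma le_maxl s x : List.In x s -> x <= maxl s.
Proof.
case: s => [//|y s] /=; elim: s y => [|z s IH] y /=; first by move=> [->|].
rewrite le_max => -[->|[<-|sx]]; apply/orP; [right|left|right] => //.
- by apply: IH; left.
- by apply: (IH y); right.
Qed.

Lemma maxl_le s b : 0 <= b -> (forall x, List.In x s -> x <= b) -> maxl s <= b.
Proof.
case: s => [//|y s] /= b0; elim: s y => [|z s IH] y /= sb; first by apply: sb; left.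
rewrite ge_max sb /=; last by right; left.
by apply: IH => x [<-|sx]; apply: sb; [left|right; right].
Qed.

Lemma maxl_ge0 s : (forall x, List.In x s -> 0 <= x) -> 0 <= maxl s.
Proof.
case: s => [//|y s] s0; apply: le_trans (le_maxl (s := y :: s) (or_introl erefl)).
by apply: s0; left.
Qed.

Lemma maxl_subset s1 s2 : (forall x, List.In x s1 -> List.In x s2) -> 0 <= maxl s2 ->
  maxl s1 <= maxl s2.
Proof. by move=> s12 s2_0; apply: maxl_le => // x /s12 /le_maxl. Qed.

Lemma b_of_ge1 s : (forall x, List.In x s -> 1 <= x) -> 1 <= b_of s.
Proof.
case: s => [//|y s] s1; apply: le_trans (le_maxl (s := y :: s) (or_introl erefl)).
by apply: s1; left.
Qed.

Lemma b_of_subset s1 s2 : (forall x, List.In x s1 -> List.In x s2) ->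
  (forall x, List.In x s2 -> 1 <= x) -> b_of s1 <= b_of s2.
Proof.
move=> s12 s2_1; have b2_1 := b_of_ge1 s2_1.
case: s1 s12 => [//|y s1] s12; apply: (@maxl_le (y :: s1)) => [|x /s12].
  exact: le_trans ler01 b2_1.
by case: s2 {s12 s2_1 b2_1} => // z s2; apply: le_maxl.
Qed.

End MaxOverLists.

Section Trees.
Variables (R : realType) (L : Type).
Implicit Types (t : tree R L) (lab : L) (ts : seq (tree R L)) (cs : seq (R * tree R L))
  (sigma : L -> nat -> R) (c : R).

Definition tree_In_ind (P : tree R L -> Prop) (HL : forall u, P (Leaf u))
    (HP : forall lab ts, (forall t, List.In t ts -> P t) -> P (PNode lab ts))
    (HC : forall cs, (forall pc, List.In pc cs -> P pc.2) -> P (CNode cs)) :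
    forall t, P t :=
  fix F t := match t with
  | Leaf u => HL u
  | PNode lab ts => HP lab ts ((fix G l : forall t, List.In t l -> P t :=
      match l with
      | [::] => fun t H => match H with end
      | t' :: l' => fun t H => match H with
                              | or_introl E => eq_ind t' P (F t') t E
                              | or_intror H' => G l' t H' end
      end) ts)
  | CNode cs => HC cs ((fix G l : forall pc, List.In pc l -> P pc.2 :=
      match l with
      | [::] => fun pc H => match H with end
      | pc' :: l' => fun pc H => match H with
                                | or_introl E => eq_ind pc' (fun x => P x.2) (F pc'.2) pc E
                                | or_intror H' => G l' pc H' end
      end) cs)
  end.

Lemma wf_PNode lab ts :
  wf_nodes (PNode lab ts) <-> ts <> [::] /\ (forall t, List.In t ts -> wf_nodes t).
Proof. by rewrite /= foldr_and. Qed.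

Lemma wf_CNode cs : wf_nodes (CNode cs) <->
  (forall pc, List.In pc cs -> 0 <= pc.1) /\ suml (map fst cs) = 1 /\
  (forall pc, List.In pc cs -> wf_nodes pc.2).
Proof. by rewrite /= !foldr_and. Qed.

Lemma no_am_PNode seen lab ts : no_am_from seen (PNode lab ts) <->
  ~ List.In lab seen /\ (forall t, List.In t ts -> no_am_from (lab :: seen) t).
Proof. by rewrite /= foldr_and. Qed.

Lemma no_am_CNode seen cs :
  no_am_from seen (CNode cs) <-> (forall pc, List.In pc cs -> no_am_from seen pc.2).
Proof. by rewrite /= foldr_and. Qed.

Lemma pnodes_PNode_child lab ts t J n : List.In t ts ->
  List.In (J, n) (pnodes t) -> List.In (J, n) (pnodes (PNode lab ts)).
Proof. by move=> tts Jt; right; apply/In_flatten_map; exists t. Qed.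

Lemma pnodes_CNode_child cs pc J n : List.In pc cs ->
  List.In (J, n) (pnodes pc.2) -> List.In (J, n) (pnodes (CNode cs)).
Proof. by move=> pccs Jpc; apply/(In_flatten_map (fun pc => pnodes pc.2)); exists pc. Qed.

Lemma behavioral_PNode_child sigma lab ts t :
  behavioral sigma (PNode lab ts) -> List.In t ts -> behavioral sigma t.
Proof. by move=> bs tts J n /(pnodes_PNode_child lab tts); apply: bs. Qed.

Lemma behavioral_CNode_child sigma cs pc :
  behavioral sigma (CNode cs) -> List.In pc cs -> behavioral sigma pc.2.
Proof. by move=> bs pccs J n /(pnodes_CNode_child pccs); apply: bs. Qed.

Lemma pnodes_gt0 t J n : wf_nodes t -> List.In (J, n) (pnodes t) -> (0 < n)%N.
Proof.
elim/tree_In_ind: t => [u _ []|lab ts IH|cs IH].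
- move=> /wf_PNode[ts0 wf_ts] /= [[_ <-]|/In_flatten_map[t tts Jt]].
    by case: ts ts0 {IH wf_ts}.
  exact: IH tts (wf_ts t tts) Jt.
- move=> /wf_CNode[_ [_ wf_cs]] /= /(In_flatten_map (fun pc => pnodes pc.2))[pc pccs Jpc].
  exact: IH pccs (wf_cs pc pccs) Jpc.
Qed.

Lemma eu_PNode sigma lab ts : eu sigma (PNode lab ts) =
  \sum_(k < size ts) sigma lab k * eu sigma (nth (Leaf 0) ts k).
Proof.
rewrite /=; under [RHS]eq_bigr do rewrite -[k in sigma lab k]add0n.
elim: ts 0%N => [|t ts IH] i /=; first by rewrite big_ord0.
by rewrite big_ord_recl addn0 IH; under eq_bigr do rewrite addSnnS.
Qed.

Lemma eu_CNode sigma cs : eu sigma (CNode cs) = \sum_(pc <- cs) pc.1 * eu sigma pc.2.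
Proof. by elim: cs => [|pc cs IH]; rewrite ?big_nil ?big_cons -?IH. Qed.

Lemma eu_ge0 sigma t : wf_nodes t -> (forall J a, 0 <= sigma J a) -> 0 <= eu sigma t.
Proof.
move=> + sigma0; elim/tree_In_ind: t => [u //|lab ts IH|cs IH].
- move=> /wf_PNode[_ wf_ts]; rewrite eu_PNode sumr_ge0 // => k _.
  have tts := nth_In (Leaf 0) (ltn_ord k).
  by rewrite mulr_ge0 // (IH _ tts (wf_ts _ tts)).
- move=> /wf_CNode[p0 [_ wf_cs]]; rewrite eu_CNode sumr_ge0_In // => pc pccs.
  by rewrite mulr_ge0 ?p0 // (IH _ pccs (wf_cs _ pccs)).
Qed.

Definition chance_beta cs : R := \sum_(pc <- cs) max_beta pc.2.

Lemma chance_betas_CNode cs :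
  chance_betas (CNode cs) = chance_beta cs :: flatten (map (fun pc => chance_betas pc.2) cs).
Proof.
rewrite /= /chance_beta; congr (_ :: _).
by elim: cs => [|pc cs IH]; rewrite ?big_nil ?big_cons -?IH.
Qed.

Lemma chance_betas_ge1 t b : wf_nodes t -> List.In b (chance_betas t) -> 1 <= b.
Proof.
elim/tree_In_ind: t b => [u b _ []|lab ts IH b|cs IH b].
- move=> /wf_PNode[_ wf_ts] /In_flatten_map[t tts]; exact: IH t tts b (wf_ts _ tts).
- move=> /wf_CNode[_ [p1 wf_cs]]; rewrite chance_betas_CNode.
  move=> [<-|/(In_flatten_map (fun pc => chance_betas pc.2))[pc pccs]]; last first.
    exact: IH pc pccs b (wf_cs _ pccs).
  have beta1 pc : List.In pc cs -> 1 <= max_beta pc.2.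
    by move=> pccs; apply: b_of_ge1 => b'; apply: IH pccs b' (wf_cs _ pccs).
  case: cs p1 beta1 {IH wf_cs} => [/esym/eqP|pc cs _ beta1]; first by rewrite oner_eq0.
  rewrite /chance_beta big_cons ler_wpDr ?beta1 //; last by left.
  by apply: sumr_ge0_In => pc' pc'cs; apply: le_trans ler01 (beta1 _ _); right.
Qed.

Lemma max_beta_ge1 t : wf_nodes t -> 1 <= max_beta t.
Proof. by move=> wf_t; apply: b_of_ge1 => b; apply: chance_betas_ge1. Qed.

End Trees.

Section PlayerOneProjection.
Variables (R : realType) (L : Type).
Implicit Types (t : tree R L) (ts : seq (tree R L)) (cs : seq (R * tree R L))
  (o : seq (L * nat)).

Fixpoint pr1_children o (lab : L) (i : nat) ts : seq (tree R (L * seq (L * nat))) :=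
  if ts is t :: ts' then pr1_from (rcons o (lab, i)) t :: pr1_children o lab i.+1 ts' else [::].

Lemma pr1_from_PNode o lab ts :
  pr1_from o (PNode lab ts) = PNode (lab, o) (pr1_children o lab 0 ts).
Proof. by rewrite /=; congr PNode; elim: ts 0%N => //= t ts IH i; rewrite IH. Qed.

Lemma map_pr1_children (T : Type) (f : tree R (L * seq (L * nat)) -> T) (g : tree R L -> T)
    o lab i ts :
  (forall t o', List.In t ts -> f (pr1_from o' t) = g t) ->
  map f (pr1_children o lab i ts) = map g ts.
Proof.
elim: ts i => //= t ts IH i fg.
by rewrite fg ?IH // => [t' o' t'ts|]; [apply: fg; right | left].
Qed.

Lemma In_pr1_children o lab i ts d : List.In d (pr1_children o lab i ts) ->
  exists2 t, List.In t ts & exists o', d = pr1_from o' t.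
Proof.
elim: ts i => //= t ts IH i [<-|/IH[t' t'ts d_t']].
- by exists t; [left | exists (rcons o (lab, i))].
- by exists t'; [right|].
Qed.

Lemma leaves_chi_pr1_from t o c : leaves_chi c (pr1_from o t) = leaves_chi c t.
Proof.
elim/tree_In_ind: t o c => [u|lab ts IH|cs IH] o c //.
- by rewrite pr1_from_PNode /=; congr flatten; apply: map_pr1_children => t o' /IH ->.
- by rewrite /= -map_comp; congr flatten; apply: List.map_ext_in => pc /IH /= ->.
Qed.

Lemma chance_betas_pr1_from t o : chance_betas (pr1_from o t) = chance_betas t.
Proof.
elim/tree_In_ind: t o => [u|lab ts IH|cs IH] o //.
- by rewrite pr1_from_PNode /=; congr flatten; apply: map_pr1_children => t o' /IH ->.
- have children_betas :
      map (fun pc => chance_betas pc.2) (map (fun pc => (pc.1, pr1_from o pc.2)) cs) =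
      map (fun pc => chance_betas pc.2) cs.
    by rewrite -map_comp; apply: List.map_ext_in => pc /IH /= ->.
  by rewrite /= children_betas.
Qed.

Lemma wf_pr1_from t o : wf_nodes t -> wf_nodes (pr1_from o t).
Proof.
elim/tree_In_ind: t o => [u|lab ts IH|cs IH] o //.
- rewrite pr1_from_PNode => /wf_PNode[ts0 wf_ts]; apply/wf_PNode; split.
    by case: ts ts0 {IH wf_ts}.
  by move=> d /In_pr1_children[t tts [o' ->]]; apply: IH tts _ (wf_ts _ tts).
- move=> /wf_CNode[p0 [p1 wf_cs]]; apply/wf_CNode; split; [|split].
  + by move=> pc /List.in_map_iff[pc' [<- /p0]].
  + by rewrite -map_comp.
  + by move=> pc /List.in_map_iff[pc' [<- pc'cs]]; apply: IH pc'cs _ (wf_cs _ pc'cs).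
Qed.

Lemma max_chi_u_pr1 t : max_chi_u (pr1 t) = max_chi_u t.
Proof. by rewrite /max_chi_u /pr1 leaves_chi_pr1_from. Qed.

Lemma max_beta_pr1 t : max_beta (pr1 t) = max_beta t.
Proof. by rewrite /max_beta /pr1 chance_betas_pr1_from. Qed.

End PlayerOneProjection.

Section UpperBound.
Variables (R : realType) (L : Type).
Implicit Types (t : tree R L) (sigma : L -> nat -> R) (c : R).

Definition max_chi_u_from c t : R := maxl (map (fun cu => cu.1 * cu.2) (leaves_chi c t)).

Lemma leaves_chi_ge0 t c cu : wf_nodes t -> 0 <= c -> List.In cu (leaves_chi c t) ->
  0 <= cu.1 * cu.2.
Proof.
elim/tree_In_ind: t c => [u|lab ts IH|cs IH] c.
- by move=> u0 c0 [<-|] //=; rewrite mulr_ge0.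
- move=> /wf_PNode[_ wf_ts] c0 /In_flatten_map[t tts]; exact: IH t tts c (wf_ts _ tts) c0.
- move=> /wf_CNode[p0 [_ wf_cs]] c0.
  move=> /(In_flatten_map (fun pc => leaves_chi (c * pc.1) pc.2))[pc pccs cut].
  exact: IH pccs _ (wf_cs _ pccs) (mulr_ge0 c0 (p0 _ pccs)) cut.
Qed.

Lemma max_chi_u_from_ge0 t c : wf_nodes t -> 0 <= c -> 0 <= max_chi_u_from c t.
Proof.
by move=> wf_t c0; apply: maxl_ge0 => _ /List.in_map_iff[cu [<- /(leaves_chi_ge0 wf_t c0)]].
Qed.

Lemma max_chi_u_ge0 t : wf_nodes t -> 0 <= max_chi_u t.
Proof. by move=> wf_t; apply: max_chi_u_from_ge0. Qed.

Lemma max_chi_u_from_subset t1 t2 c1 c2 : wf_nodes t2 -> 0 <= c2 ->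
  (forall cu, List.In cu (leaves_chi c1 t1) -> List.In cu (leaves_chi c2 t2)) ->
  max_chi_u_from c1 t1 <= max_chi_u_from c2 t2.
Proof.
move=> wf_t2 c2_0 sub; apply: maxl_subset; last exact: max_chi_u_from_ge0.
by move=> _ /List.in_map_iff[cu [<- /sub cu2]]; apply/List.in_map_iff; exists cu.
Qed.

Lemma max_beta_subset t1 t2 : wf_nodes t2 ->
  (forall b, List.In b (chance_betas t1) -> List.In b (chance_betas t2)) ->
  max_beta t1 <= max_beta t2.
Proof. by move=> wf_t2 sub; apply: b_of_subset sub _ => b; apply: chance_betas_ge1. Qed.

Lemma chi_eu_le_max_beta_chi_u t sigma c : wf_nodes t -> behavioral sigma t -> 0 <= c ->
  c * eu sigma t <= max_beta t * max_chi_u_from c t.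
Proof.
elim/tree_In_ind: t c => [u|lab ts IH|cs IH] c wf_t sigma_t c0.
- by rewrite /max_beta /max_chi_u_from /= mul1r.
- have /wf_PNode[_ wf_ts] := wf_t.
  have [sigma0 sigma1] := sigma_t lab (size ts) (or_introl erefl).
  rewrite eu_PNode mulr_sumr -[X in _ <= X]mulr1 -sigma1 mulr_sumr.
  apply: ler_sum => k _; rewrite mulrCA [X in _ <= X]mulrC ler_wpM2l ?sigma0 //.
  set t := nth (Leaf 0) ts k; have tts : List.In t ts := nth_In _ (ltn_ord k).
  apply: le_trans (IH t tts c (wf_ts _ tts) (behavioral_PNode_child sigma_t tts) c0) _.
  apply: ler_pM.
  + exact: le_trans ler01 (max_beta_ge1 (wf_ts _ tts)).
  + exact: max_chi_u_from_ge0 (wf_ts _ tts) c0.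
  + by apply: max_beta_subset => // b bt; apply/In_flatten_map; exists t.
  + by apply: max_chi_u_from_subset => // cu cut; apply/In_flatten_map; exists t.
- have /wf_CNode[p0 [_ wf_cs]] := wf_t.
  rewrite eu_CNode mulr_sumr.
  apply: (@le_trans _ _ (\sum_(pc <- cs) max_beta pc.2 * max_chi_u_from c (CNode cs))).
  + apply: ler_sum_In => pc pccs; rewrite mulrA.
    have cp0 : 0 <= c * pc.1 by rewrite mulr_ge0 ?p0.
    apply: le_trans (IH pc pccs _ (wf_cs _ pccs) (behavioral_CNode_child sigma_t pccs) cp0) _.
    apply: ler_wpM2l; first exact: le_trans ler01 (max_beta_ge1 (wf_cs _ pccs)).
    apply: max_chi_u_from_subset => // cu cut.
    by apply/(In_flatten_map (fun pc => leaves_chi (c * pc.1) pc.2)); exists pc.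
  + rewrite -mulr_suml ler_wpM2r ?max_chi_u_from_ge0 //.
    by rewrite /max_beta chance_betas_CNode; apply: le_maxl; left.
Qed.

Lemma eu_le_max_beta_chi_u t sigma : wf_nodes t -> behavioral sigma t ->
  eu sigma t <= max_beta t * max_chi_u t.
Proof. by move=> wf_t sigma_t; rewrite -[eu _ _]mul1r; apply: chi_eu_le_max_beta_chi_u. Qed.

End UpperBound.

Section PureStrategies.
Variables (R : realType) (L : Type).
Implicit Types (t : tree R L) (P : seq (L * nat)) (J : L) (a : nat) (sigma : L -> nat -> R)
  (c : R).

Fixpoint plan_action P J : option nat :=
  if P is (J', a) :: P' then if `[< J = J' >] then Some a else plan_action P' J else None.

Definition plan_strategy P J a : R := if a == odflt 0%N (plan_action P J) then 1 else 0.

Lemma plan_action_In P J a : plan_action P J = Some a -> List.In (J, a) P.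
Proof.
elim: P => [//|[J' a'] P IH] /=.
by case: (asboolP (J = J')) => [-> [<-]|_ /IH]; [left | right].
Qed.

Lemma In_plan_action P J a : List.NoDup (map fst P) -> List.In (J, a) P ->
  plan_action P J = Some a.
Proof.
elim: P => [//|[J' a'] P IH] /= /List.NoDup_cons_iff[J'P P_nodup] [[<- <-]|JaP].
  by rewrite asboolT.
rewrite asboolF ?IH // => JJ'; apply: J'P; rewrite -JJ'.
by apply/List.in_map_iff; exists (J, a).
Qed.

Lemma plan_strategy_ge0 P J a : 0 <= plan_strategy P J a.
Proof. by rewrite /plan_strategy; case: ifP. Qed.

Lemma plan_strategy_In P J a : List.NoDup (map fst P) -> List.In (J, a) P ->
  plan_strategy P J a = 1.
Proof. by move=> P_nodup JaP; rewrite /plan_strategy (In_plan_action P_nodup JaP) eqxx. Qed.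

Lemma plan_strategy_behavioral t P : wf_nodes t ->
  (forall J a n, List.In (J, a) P -> List.In (J, n) (pnodes t) -> (a < n)%N) ->
  behavioral (plan_strategy P) t.
Proof.
move=> wf_t P_t J n Jt; split=> [a _|]; first exact: plan_strategy_ge0.
rewrite -big_mkcond (big_ord1_eq _ (fun=> 1)).
suff -> : (odflt 0%N (plan_action P J) < n)%N by [].
case E: plan_action => [a|] /=; first exact: P_t (plan_action_In E) Jt.
exact: pnodes_gt0 wf_t Jt.
Qed.

Lemma plan_to_leaf t seen c cu : no_am_from seen t -> wf_nodes t -> 0 <= c ->
  List.In cu (leaves_chi c t) ->
  exists P : seq (L * nat),
    [/\ List.NoDup (map fst P),
        forall J a, List.In (J, a) P ->
          ~ List.In J seen /\ exists2 n, List.In (J, n) (pnodes t) & (a < n)%N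
      & forall sigma, (forall J a, 0 <= sigma J a) ->
          (forall J a, List.In (J, a) P -> sigma J a = 1) -> cu.1 * cu.2 <= c * eu sigma t].
Proof.
elim/tree_In_ind: t seen c => [u|lab ts IH|cs IH] seen c no_am wf_t c0.
- by move=> [<-|//]; exists [::]; split=> //; constructor.
- have /no_am_PNode[lab_fresh no_am_ts] := no_am; have /wf_PNode[_ wf_ts] := wf_t.
  move=> /In_flatten_map[t tts cut].
  have [P [P_nodup P_ok P_le]] := IH t tts _ c (no_am_ts _ tts) (wf_ts _ tts) c0 cut.
  have [k kts t_k] := In_nth (Leaf 0) tts.
  exists ((lab, k) :: P); split.
  + constructor => // /List.in_map_iff[[J a] [/= J_lab /P_ok[J_fresh _]]].
    by apply: J_fresh; rewrite J_lab; left.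
  + move=> J a [[<- <-]|/P_ok[J_fresh [n Jt an]]].
      by split=> //; exists (size ts) => //; left.
    split=> [J_seen|]; first by apply: J_fresh; right.
    by exists n => //; apply: pnodes_PNode_child tts Jt.
  + move=> sigma sigma0 sigma_P.
    apply: le_trans (P_le sigma sigma0 (fun J a JaP => sigma_P J a (or_intror JaP))) _.
    rewrite ler_wpM2l // eu_PNode (bigD1 (Ordinal kts)) //= t_k sigma_P ?mul1r; last by left.
    rewrite lerDl sumr_ge0 // => k' _.
    by rewrite mulr_ge0 // (eu_ge0 (wf_ts _ (nth_In _ (ltn_ord k')))).
- move: no_am => /no_am_CNode no_am_cs; have /wf_CNode[p0 [_ wf_cs]] := wf_t.
  move=> /(In_flatten_map (fun pc => leaves_chi (c * pc.1) pc.2))[pc pccs cut].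
  have cp0 : 0 <= c * pc.1 by rewrite mulr_ge0 ?p0.
  have [P [P_nodup P_ok P_le]] := IH pc pccs seen _ (no_am_cs _ pccs) (wf_cs _ pccs) cp0 cut.
  exists P; split=> // [J a /P_ok[J_fresh [n Jt an]]|sigma sigma0 sigma_P].
    by split=> //; exists n => //; apply: pnodes_CNode_child pccs Jt.
  apply: le_trans (P_le sigma sigma0 sigma_P) _.
  rewrite -mulrA eu_CNode ler_wpM2l //.
  apply: (ler_term_sum_In (F := fun pc => pc.1 * eu sigma pc.2)) pccs => pc' pc'cs.
  by rewrite mulr_ge0 ?p0 // (eu_ge0 (wf_cs _ pc'cs)).
Qed.

End PureStrategies.

Arguments plan_strategy {R L} P J a.
Arguments plan_strategy_ge0 {R L} P J a.
Arguments plan_strategy_In {R L} [P J a].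

Section OptimalValue.
Variables (R : realType) (L : Type).
Implicit Types (t : tree R L) (sigma : L -> nat -> R).

Lemma opt_value_le_max_beta_chi_u t : wf_nodes t -> opt_value t <= max_beta t * max_chi_u t.
Proof.
move=> wf_t; apply: ge_sup => [|_ [sigma sigma_t <-]]; last exact: eu_le_max_beta_chi_u.
by exists (eu (plan_strategy [::]) t), (plan_strategy [::]) => //; apply: plan_strategy_behavioral.
Qed.

Lemma eu_le_opt_value t sigma : wf_nodes t -> behavioral sigma t -> eu sigma t <= opt_value t.
Proof.
move=> wf_t sigma_t; apply: sup_upper_bound; last by exists sigma.
split; first by exists (eu sigma t), sigma.
by exists (max_beta t * max_chi_u t) => _ [s s_t <-]; apply: eu_le_max_beta_chi_u.
Qed.

Lemma opt_value_ge0 t : wf_nodes t -> 0 <= opt_value t.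
Proof.
move=> wf_t; have s_t : behavioral (plan_strategy [::]) t by apply: plan_strategy_behavioral.
exact: le_trans (eu_ge0 wf_t (plan_strategy_ge0 [::])) (eu_le_opt_value wf_t s_t).
Qed.

Lemma max_chi_u_le_opt_value t : wf_game t -> no_absentmindedness t ->
  max_chi_u t <= opt_value t.
Proof.
move=> [wf_t consistent] no_am; apply: maxl_le; first exact: opt_value_ge0.
move=> _ /List.in_map_iff[cu [<- cut]].
have [P [P_nodup P_ok P_le]] := plan_to_leaf no_am wf_t ler01 cut.
have P_t : behavioral (plan_strategy P) t.
  apply: plan_strategy_behavioral => // J a n /P_ok[_ [m Jm am]] Jn.
  by rewrite (consistent J n m Jn Jm).
apply: le_trans (P_le _ (plan_strategy_ge0 P) (fun J a => plan_strategy_In P_nodup)) _.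
by rewrite mul1r; apply: eu_le_opt_value.
Qed.

End OptimalValue.

Theorem proposition8 (R : realType) (L : Type) (G : tree R L) :
  wf_game G -> no_absentmindedness G ->
  VoR_opt G <= opt_value (pr1 G) / max_chi_u G /\
  opt_value (pr1 G) / max_chi_u G <= max_beta G.
Proof.
move=> game_G no_am; have [wf_G _] := game_G.
have wf_pr1G : wf_nodes (pr1 G) := wf_pr1_from [::] wf_G.
have pr1_le : opt_value (pr1 G) <= max_beta G * max_chi_u G.
  by rewrite -max_beta_pr1 -max_chi_u_pr1; apply: opt_value_le_max_beta_chi_u.
have pr1_ge0 := opt_value_ge0 wf_pr1G.
have chi_u_le := max_chi_u_le_opt_value game_G no_am.
have beta_ge1 := max_beta_ge1 wf_G.
rewrite /VoR_opt; have := max_chi_u_ge0 wf_G.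
rewrite le_eqVlt => /orP[/eqP chi_u0|chi_u_gt0].
- rewrite -chi_u0 mulr0 in pr1_le.
  have -> : opt_value (pr1 G) = 0 by apply: le_anti; rewrite pr1_le pr1_ge0.
  by rewrite -chi_u0 !mul0r (le_trans ler01 beta_ge1).
- have opt_gt0 := lt_le_trans chi_u_gt0 chi_u_le.
  split; last by rewrite ler_pdivrMr.
  by rewrite ler_wpM2l // lef_pV2 // posrE.
Qed.
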